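(* Let $\mathcal{B}$ be a $\sigma$-algebra on a nonempty set $E$, let $\nu$ be an optimal measure on $\mathcal{B}$, and let $(H_n)_{n\in N}$ be an at most countable collection of pairwise disjoint $\nu$-atoms $H_n\in\mathcal{B}$ such that for every $B\in\mathcal{B}$ the supremum $\sup_{n\in N}\nu(B\cap H_n)$ is attained and equals $\nu(B)$. Then $|\nu|=\sum_{n\in N}\nu(H_n)$. In particular, $\nu$ is of bounded variation if and only if $\sum_{n\in N}\nu(H_n)<\infty$.
   Context: An optimal measure is a map $\nu:\mathcal{B}\to[0,\infty]$ with $\nu(\emptyset)=0$, $\nu(B\cup B')=\max(\nu(B),\nu(B'))$, continuous from below ($\nu(\bigcup_nB_n)=\lim_n\nu(B_n)$ for nondecreasing sequences) and from above ($\nu(\bigcap_nB_n)=\lim_n\nu(B_n)$ for nonincreasing sequences). A $\nu$-atom is $H\in\mathcal{B}$ with $\nu(H)>0$ such that for each $B\in\mathcal{B}$ either $\nu(H\setminus B)=0$ or $\nu(H\cap B)=0$. (For every optimal measure such a collection $(H_n)$ exists.) $|\nu|=\sup_\pi\sum_{B\in\pi}\nu(B)$, the supremum over finite partitions $\pi$ of $E$ into elements of $\mathcal{B}$; $\nu$ is of bounded variation if $|\nu|<\infty$. *)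

From HB Require Import structures.
From mathcomp Require Import all_boot all_order all_algebra.
From mathcomp Require Import all_classical all_reals all_analysis.
Set Implicit Arguments. Unset Strict Implicit. Unset Printing Implicit Defensive.
Import Order.TTheory GRing.Theory Num.Theory.
Local Open Scope classical_set_scope.
Local Open Scope ring_scope.
Local Open Scope ereal_scope.

(* The sigma-algebra B on E is the measurable sets of T : measurableType d. *)

Definition optimal_measure {d} {T : measurableType d} {R : realType}
  (nu : set T -> \bar R) : Prop :=
  [/\ (forall A, measurable A -> 0 <= nu A),
      nu set0 = 0,
      (forall A B, measurable A -> measurable B ->
         nu (A `|` B) = maxe (nu A) (nu B)),
      (forall F : nat -> set T, (forall n, measurable (F n)) ->
         (forall n, F n `<=` F n.+1) ->
         (fun n => nu (F n)) @ \oo --> nu (\bigcup_n F n)) &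
      (forall F : nat -> set T, (forall n, measurable (F n)) ->
         (forall n, F n.+1 `<=` F n) ->
         (fun n => nu (F n)) @ \oo --> nu (\bigcap_n F n))].

Definition nu_atom {d} {T : measurableType d} {R : realType}
  (nu : set T -> \bar R) (H : set T) : Prop :=
  [/\ measurable H, 0 < nu H &
      forall B, measurable B -> nu (H `\` B) = 0 \/ nu (H `&` B) = 0].

Definition finite_partition {d} {T : measurableType d} (s : seq (set T)) : Prop :=
  [/\ (forall i, (i < size s)%N -> measurable (nth set0 s i)),
      (forall i j, (i < size s)%N -> (j < size s)%N -> i != j ->
         nth set0 s i `&` nth set0 s j = set0) &
      \big[setU/set0]_(A <- s) A = setT].

Definition abs_variation {d} {T : measurableType d} {R : realType}
  (nu : set T -> \bar R) : \bar R :=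
  ereal_sup [set \sum_(A <- s) nu A | s in finite_partition].

From HB Require Import structures.
From mathcomp Require Import all_boot all_order all_algebra.
From mathcomp Require Import all_classical all_reals all_analysis.
Import Order.TTheory GRing.Theory Num.Theory.
Local Open Scope classical_set_scope.
Local Open Scope ring_scope.
Local Open Scope ereal_scope.

(* For a partition (A_i) of E, each A_i carries its mass on a single atom,
   nu(A_i) = nu(A_i ∩ H_n), and each atom H_n meets at most one A_i in a set
   of positive mass; hence sum_i nu(A_i) <= sum_n nu(H_n).  Conversely, the
   atoms H_n (n < m) together with the complement of their union form a
   partition, whose sum dominates the m-th partial sum of sum_n nu(H_n). *)

Section seq_setU.
Context {d : measure_display} {T : measurableType d}.

Lemma sub_nth_big_setU (s : seq (set T)) i : (i < size s)%N ->
  nth set0 s i `<=` \big[setU/set0]_(A <- s) A.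
Proof.
elim: s i => [|A s IHs] [|i] //= ltis; rewrite big_cons; first exact: subsetUl.
exact: subset_trans (IHs _ ltis) (@subsetUr _ _ _).
Qed.

Lemma measurable_big_setU (s : seq (set T)) :
  (forall A, A \in s -> measurable A) -> measurable (\big[setU/set0]_(A <- s) A).
Proof.
elim: s => [|A s IHs] ms; first by rewrite big_nil.
rewrite big_cons; apply: measurableU; first by apply: ms; rewrite inE eqxx.
by apply: IHs => B sB; apply: ms; rewrite inE sB orbT.
Qed.

Lemma finite_partition_rcons_setC (s : seq (set T)) :
  (forall i, (i < size s)%N -> measurable (nth set0 s i)) ->
  (forall i j, (i < size s)%N -> (j < size s)%N -> i != j ->
     nth set0 s i `&` nth set0 s j = set0) ->
  finite_partition (rcons s (~` \big[setU/set0]_(A <- s) A)).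
Proof.
move=> ms ds; set U := \big[setU/set0]_(A <- s) A.
have mU : measurable U.
  apply: measurable_big_setU => A /(nthP set0) [i lti <-]; exact: ms.
have disjC i : (i < size s)%N -> nth set0 s i `&` ~` U = set0.
  by move=> lti; apply/disjoints_subset; rewrite setCK; exact: sub_nth_big_setU.
split.
- move=> i; rewrite size_rcons ltnS nth_rcons.
  case: ltnP => [lti _|ge_i le_i]; first exact: ms.
  by rewrite (_ : i == size s) ?eqn_leq ?ge_i ?le_i //; exact: measurableC.
- move=> i j; rewrite size_rcons !ltnS !nth_rcons => le_i le_j neq_ij.
  case: (ltnP i) => lti; case: (ltnP j) => ltj.
  + exact: ds.
  + by rewrite (_ : j == size s) ?eqn_leq ?le_j ?ltj // disjC.
  + by rewrite (_ : i == size s) ?eqn_leq ?le_i ?lti // setIC disjC.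
  + by move: neq_ij; rewrite (@anti_leq i (size s)) ?le_i ?lti //
      (@anti_leq j (size s)) ?le_j ?ltj ?eqxx.
- by rewrite -cats1 big_cat big_seq1 /=; exact: setUv.
Qed.
End seq_setU.

Section optimal_measure.
Context {d : measure_display} {T : measurableType d} {R : realType}
  {nu : set T -> \bar R}.
Hypothesis nuo : optimal_measure nu.

Lemma optimal_measure_ge0 A : measurable A -> 0 <= nu A.
Proof. by case: nuo => + _ _ _ _; apply. Qed.

Lemma optimal_measure_le A B : measurable A -> measurable B ->
  A `<=` B -> nu A <= nu B.
Proof.
case: nuo => _ _ nuU _ _ mA mB AB.
by rewrite -(setUidr AB) nuU // le_max lexx.
Qed.

Lemma le_abs_variation (s : seq (set T)) :
  finite_partition s -> \sum_(A <- s) nu A <= abs_variation nu.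
Proof. by move=> ps; apply: ereal_sup_ubound; exists s. Qed.

(* Pieces of an atom are null or conull, so two disjoint pieces of positive
   mass cannot coexist. *)
Lemma sum_atom_traces_le (k : nat) (u : 'I_k -> set T) (H : set T) :
  nu_atom nu H -> (forall i, measurable (u i)) ->
  (forall i j, i != j -> u i `&` u j = set0) ->
  \sum_(i < k) nu (u i `&` H) <= nu H.
Proof.
move=> [mH _ atomH] mu du.
have muH i : measurable (u i `&` H) by exact: measurableI.
have null_other i j : i != j -> nu (u i `&` H) != 0 -> nu (u j `&` H) = 0.
  move=> neq_ij; case: (atomH _ (mu i)) => [nuHDi _|];
    last by rewrite setIC => ->; rewrite eqxx.
  apply/eqP; rewrite eq_le optimal_measure_ge0 // andbT -nuHDi.
  apply: optimal_measure_le => //; first exact: measurableD.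
  move=> x [ujx Hx]; split=> // uix.
  by have : (u i `&` u j) x by []; rewrite du.
have [[i0 nz_i0]|all_null] := pselect (exists i, nu (u i `&` H) != 0).
  rewrite (bigD1 i0) //= big1 ?adde0; first exact: optimal_measure_le.
  by move=> j ji0; apply: (null_other i0); rewrite // eq_sym.
rewrite big1 ?optimal_measure_ge0 // => i _.
by apply/eqP; apply: contrapT => nz_i; apply: all_null; exists i; apply/negP.
Qed.

End optimal_measure.

Section atomic_decomposition.
Context {d : measure_display} {T : measurableType d} {R : realType}
  {nu : set T -> \bar R} {N : set nat} {H : nat -> set T}.
Hypotheses (nuo : optimal_measure nu)
  (atomH : forall n, n \in N -> nu_atom nu (H n))
  (disjH : forall n m, n \in N -> m \in N -> n <> m -> H n `&` H m = set0)
  (supH : forall B, measurable B ->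
     nu B = ereal_sup [set nu (B `&` H n) | n in N] /\
     exists2 n, n \in N & nu (B `&` H n) = ereal_sup [set nu (B `&` H m) | m in N]).

Let measurableH n : n \in N -> measurable (H n).
Proof. by case/atomH. Qed.

Lemma atom_traces_bound (k : nat) (u : 'I_k -> set T) :
  (forall i, measurable (u i)) ->
  exists M, forall i, nu (u i) <= \sum_(n < M | (n : nat) \in N) nu (u i `&` H n).
Proof.
move=> mu; have attained i : exists n, n \in N /\ nu (u i) = nu (u i `&` H n).
  by have [-> [n nN <-]] := supH _ (mu i); exists n.
have [f fP] := boolp.choice attained.
exists (\max_(i < k) (f i).+1)%N => i; rewrite (fP i).2.
have lt_fi : (f i < \max_(i < k) (f i).+1)%N.
  exact: (@leq_bigmax _ (fun i : 'I_k => (f i).+1) i).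
rewrite (bigD1 (Ordinal lt_fi)) /=; last exact: (fP i).1.
apply: leeDl; apply: sume_ge0 => n /andP[nN _].
by apply: optimal_measure_ge0 => //; apply: measurableI => //; exact: measurableH.
Qed.

Lemma abs_variation_le_sum_atoms :
  abs_variation nu <= \sum_(n <oo | n \in N) nu (H n).
Proof.
apply: ge_ereal_sup => _ [s [ms ds _] <-].
rewrite (big_nth set0) big_mkord; set u := fun i : 'I_(size s) => nth set0 s i.
have mu i : measurable (u i) by exact: ms.
have [M uM] := @atom_traces_bound _ u mu.
apply: (@le_trans _ _ (\sum_(i < size s) \sum_(n < M | (n : nat) \in N)
                         nu (u i `&` H n))); first by apply: lee_sum => i _; exact: uM.
rewrite exchange_big /=.
apply: (@le_trans _ _ (\sum_(n < M | (n : nat) \in N) nu (H n))); last first.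
  rewrite -(big_mkord (fun n => n \in N) (fun n => nu (H n))).
  by apply: nneseries_lim_ge => n _ /measurableH /(optimal_measure_ge0 nuo).
apply: lee_sum => n nN; apply: sum_atom_traces_le => //; first exact: atomH.
by move=> i j neq_ij; exact: ds.
Qed.

Lemma sum_atoms_le_abs_variation :
  \sum_(n <oo | n \in N) nu (H n) <= abs_variation nu.
Proof.
apply: lime_le.
  by apply: is_cvg_nneseries => n _ /measurableH /(optimal_measure_ge0 nuo).
apply: nearW => m /=.
pose idx := [seq n <- iota 0 m | n \in N].
pose s := [seq H n | n <- idx].
have idxN i : (i < size idx)%N -> nth 0%N idx i \in N.
  by move=> lti; have := mem_nth 0%N lti; rewrite mem_filter => /andP[].
have size_s : size s = size idx by rewrite size_map.
apply: (@le_trans _ _ (\sum_(A <- rcons s (~` \big[setU/set0]_(A <- s) A)) nu A)).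
  rewrite -cats1 big_cat big_seq1 /= big_map big_filter /index_iota subn0.
  apply: leeDl; apply: (optimal_measure_ge0 nuo); apply: measurableC.
  apply: measurable_big_setU => A /mapP [n].
  by rewrite mem_filter => /andP[nN _] ->; exact: measurableH.
apply: le_abs_variation; apply: finite_partition_rcons_setC.
  move=> i; rewrite size_s => lti; rewrite (nth_map 0%N) //.
  exact: measurableH (idxN _ lti).
move=> i j; rewrite size_s => lti ltj neq_ij; rewrite !(nth_map 0%N) //.
apply: disjH; [exact: idxN | exact: idxN |].
by apply/eqP; rewrite nth_uniq // filter_uniq // iota_uniq.
Qed.

End atomic_decomposition.

Theorem proposition6p7 (d : measure_display) (T : measurableType d)
  (R : realType) (x0 : T) (nu : set T -> \bar R)
  (N : set nat) (H : nat -> set T) :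
  optimal_measure nu ->
  (forall n, n \in N -> nu_atom nu (H n)) ->
  (forall n m, n \in N -> m \in N -> n <> m -> H n `&` H m = set0) ->
  (forall B, measurable B ->
     nu B = ereal_sup [set nu (B `&` H n) | n in N] /\
     exists2 n, n \in N & nu (B `&` H n) = ereal_sup [set nu (B `&` H m) | m in N]) ->
  abs_variation nu = \sum_(n <oo | n \in N) nu (H n) /\
  (abs_variation nu < +oo <-> \sum_(n <oo | n \in N) nu (H n) < +oo).
Proof.
move=> nuo atomH disjH supH.
suff -> : abs_variation nu = \sum_(n <oo | n \in N) nu (H n) by [].
apply/eqP; rewrite eq_le abs_variation_le_sum_atoms //.
exact: sum_atoms_le_abs_variation.
Qed.
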